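(* Let $G$ be a group and $L,N$ normal subgroups with $L\geqslant N$ and $N\geqslant[G,L]$. For $\nu\in\mathrm{Q}(N)^G$ the following are equivalent: (1) $\nu$ is extendable to $L$, i.e. $\nu=\psi|_N$ for some $\psi\in\mathrm{Q}(L)^G$; (2) $\mathscr{D}^t_{G,L}(\nu)<\infty$ for every $t\in\mathbb{N}$; (3) $\mathscr{D}^t_{G,L}(\nu)<\infty$ for some $t\in\mathbb{N}$; (4) $\mathscr{D}^1_{G,L}(\nu)=\mathscr{D}(\nu)$; (5) $\mathscr{D}^1_{G,L}(\nu)<\infty$.
   Context: $[g,h]=ghg^{-1}h^{-1}$. $\mathscr{D}(\nu)=\sup_{x_1,x_2\in N}|\nu(x_1x_2)-\nu(x_1)-\nu(x_2)|$. $\mathrm{Q}(N)^G$ (resp. $\mathrm{Q}(L)^G$): homogeneous quasimorphisms on $N$ (resp. $L$) invariant under conjugation by $G$. For $t\in\mathbb{N}$, $\mathscr{D}^t_{G,L}(\nu)=\sup\{|\nu([g_1,g_1']\cdots[g_t,g_t'])|: g_1,\dots,g_t\in G,\ g_1',\dots,g_t'\in L\}\in[0,\infty]$ (these products lie in $N$ since $N\geqslant[G,L]$). *)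

From HB Require Import structures.
From mathcomp Require Import all_boot all_order all_algebra.
From mathcomp Require Import classical_sets reals constructive_ereal ereal.
Set Implicit Arguments. Unset Strict Implicit. Unset Printing Implicit Defensive.
Import Order.TTheory GRing.Theory Num.Theory.
Local Open Scope classical_set_scope.
Local Open Scope ring_scope.

Section Defs.
Variable G : groupType.

Definition pcomm (g h : G) : G := (g * h * g^-1 * h^-1)%g.

Definition is_subgroup (H : G -> Prop) : Prop :=
  H 1%g /\ (forall x y, H x -> H y -> H (x * y)%g) /\ (forall x, H x -> H (x^-1)%g).

Definition is_normal (H : G -> Prop) : Prop :=
  is_subgroup H /\ forall g x, H x -> H (g * x * g^-1)%g.

Definition comm_subgroup (L : G -> Prop) (x : G) : Prop :=
  forall H : G -> Prop, is_subgroup H ->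
    (forall g l, L l -> H (pcomm g l)) -> H x.

Definition zpowg (x : G) (z : int) : G :=
  match z with
  | Posz n => (x ^+ n)%g
  | Negz n => ((x^-1) ^+ n.+1)%g
  end.

Variable R : realType.

(* nu : G -> R is regarded as a function on the subgroup H (values off H are
   irrelevant).  Homogeneous quasimorphism on H, invariant under conjugation
   by G: membership in Q(H)^G. *)
Definition in_QG (H : G -> Prop) (nu : G -> R) : Prop :=
  (exists D : R, forall x y, H x -> H y -> `|nu (x * y)%g - nu x - nu y| <= D)
  /\ (forall x (z : int), H x -> nu (zpowg x z) = z%:~R * nu x)
  /\ (forall g x, H x -> nu (g * x * g^-1)%g = nu x).

Definition defect (H : G -> Prop) (nu : G -> R) : \bar R :=
  ereal_sup [set (`|nu (x * y)%g - nu x - nu y|)%:E | x in H & y in H].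

Definition defect_GL (L : G -> Prop) (t : nat) (nu : G -> R) : \bar R :=
  ereal_sup [set e | exists (g g' : 'I_t -> G),
      (forall i, L (g' i)) /\
      e = (`|nu (\prod_(i < t) pcomm (g i) (g' i))%g|)%:E].

End Defs.

(* Let C be the supremum of |nu [g, l]| over g in G and l in L.  Bavard's identity writes
   a^(2m) b^(2m) (ab)^(-2m) as a product of m commutators [u, v] with v in the subgroup generated
   by a and b; hence a homogeneous quasimorphism that is bounded by C on such commutators has
   defect at most C.  For nu this gives D(nu) <= C, and with a = g l g^-1, b = l^-1, for which
   [g, l]^n = (a^n b^n (ab)^-n)^-1 [g, l^n], it gives |nu [g, l]| <= (C + D(nu)) / 2, so C = D(nu)
   once C is finite.  An extension psi bounds D^t by 2 t D(psi).  Conversely, when C is finite,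
   Zorn's lemma provides a maximal extension of nu to a subgroup between N and L that is
   homogeneous, G-invariant and of defect at most C.  Its domain is all of L, since an extension
   psi on M extends to the subgroup generated by M and l: homogenize m l^j |-> psi m + j alpha,
   where alpha is the slope of psi on the powers of l in M, and Bavard's bound brings the defect
   back down to C. *)

From HB Require Import structures.
From mathcomp Require Import all_boot all_order all_algebra.
From mathcomp Require Import classical_sets reals constructive_ereal ereal.
From mathcomp Require Import boolp zify ring lra.
Import Order.TTheory GRing.Theory Num.Theory.
Set Implicit Arguments. Unset Strict Implicit. Unset Printing Implicit Defensive.

Section Groups.
Variable G : groupType.
Local Open Scope group_scope.
Implicit Types (P : G -> Prop) (a b g x y : G).

Lemma subgroup1 P : is_subgroup P -> P 1.
Proof. by case. Qed.

Lemma subgroupM P x y : is_subgroup P -> P x -> P y -> P (x * y).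
Proof. by case=> _ [hM _]; apply: hM. Qed.

Lemma subgroupV P x : is_subgroup P -> P x -> P x^-1.
Proof. by case=> _ [_ hV]; apply: hV. Qed.

Lemma subgroupX P x n : is_subgroup P -> P x -> P (x ^+ n).
Proof.
move=> hP hx; elim: n => [|n IH]; first exact: subgroup1.
by rewrite expgS; apply: subgroupM.
Qed.

Lemma subgroup_zpowg P x (j : int) : is_subgroup P -> P x -> P (zpowg x j).
Proof. by move=> hP hx; case: j => n /=; apply: subgroupX => //; apply: subgroupV. Qed.

Lemma normal_conj P g x : is_normal P -> P x -> P (g * x * g^-1).
Proof. by case=> _ hJ; apply: hJ. Qed.

Lemma expg_conj g x n : (g * x * g^-1) ^+ n = g * x ^+ n * g^-1.
Proof.
have conjE y : g * y * g^-1 = y ^ g^-1 by rewrite conjgE invgK mulgA.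
by rewrite !conjE conjXg.
Qed.

Lemma conj_pcomm g x : g * x * g^-1 = pcomm g x * x.
Proof. by rewrite /pcomm mulgVK. Qed.

Lemma zpowgD1 x (j : int) : zpowg x (j + 1)%R = zpowg x j * x.
Proof.
case: j => [n|[|n]].
- have -> : (Posz n + 1)%R = Posz n.+1 by lia.
  by rewrite /= expgSr.
- have -> : (Negz 0 + 1)%R = Posz 0 by lia.
  by rewrite /= expg1 mulVg.
- have -> : (Negz n.+1 + 1)%R = Negz n by lia.
  by rewrite /= [in RHS]expgSr mulgVK.
Qed.

Lemma zpowgB1 x (j : int) : zpowg x (j - 1)%R = zpowg x j * x^-1.
Proof. by rewrite -[in RHS](subrK 1%R j) zpowgD1 mulgK. Qed.

Lemma zpowgD x (j k : int) : zpowg x (j + k)%R = zpowg x j * zpowg x k.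
Proof.
case: k => n; elim: n => [|n IH].
- by rewrite addr0 mulg1.
- have -> : Posz n.+1 = (Posz n + 1)%R by lia.
  by rewrite addrA !zpowgD1 IH mulgA.
- have -> : Negz 0 = (0 - 1)%R by lia.
  by rewrite addrA addr0 !zpowgB1 mul1g.
- have -> : Negz n.+1 = (Negz n - 1)%R by lia.
  by rewrite addrA !zpowgB1 IH mulgA.
Qed.

Lemma zpowgN x (j : int) : zpowg x (- j)%R = (zpowg x j)^-1.
Proof. by apply: (mulIg (zpowg x j)); rewrite -zpowgD addNr mulVg. Qed.

Definition pow_gap a b n := a ^+ n * b ^+ n * ((a * b) ^+ n)^-1.

Definition gap_comm a b n :=
  pcomm (a ^+ n.+2 * b * (a ^+ n)^-1) (a ^+ n * b ^+ n * a^-1 * (a ^+ n)^-1).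

Lemma pow_gapSS a b n : pow_gap a b n.+2 = gap_comm a b n * pow_gap a b n.
Proof.
rewrite /pow_gap /gap_comm /pcomm.
set X := a ^+ n; set Y := b ^+ n; set Z := (a * b) ^+ n.
have -> : a ^+ n.+2 = a * a * X by rewrite !expgS mulgA.
have -> : b ^+ n.+2 = b * Y * b by rewrite expgS expgSr mulgA.
have -> : (a * b) ^+ n.+2 = Z * (a * b) * (a * b) by rewrite !expgSr.
rewrite !invgM !invgK !mulgA !mulgK !mulgVK.
have aX : commute a X by apply: commuteX.
have aVX : commute a^-1 X by apply/commute_sym/commuteV/commute_sym.
rewrite -!mulgA; do 5 congr (_ * _).
by rewrite !mulgA; congr (_ * _); rewrite -!mulgA -aX mulKg aVX mulKg.
Qed.

End Groups.

Section RealBounds.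
Local Open Scope ring_scope.
Variable R : realType.
Implicit Types x y z u v w c : R.

Lemma ler_normD3 x y z : `|x + y + z| <= `|x| + `|y| + `|z|.
Proof. by apply: le_trans (ler_normD _ _) _; rewrite lerD2r ler_normD. Qed.

Lemma ler_normD4 u v w z : `|u + v + w + z| <= `|u| + `|v| + `|w| + `|z|.
Proof. by apply: le_trans (ler_normD _ _) _; rewrite lerD2r ler_normD3. Qed.

Lemma ler_norm_defect x y z : `|x| <= `|x - y - z| + `|y| + `|z|.
Proof.
by have := ler_normD3 (x - y - z) y z; have -> : x - y - z + y + z = x by ring.
Qed.

Lemma le_of_le_add_divn x y c :
  (forall m : nat, (0 < m)%N -> x <= y + c / m%:R) -> x <= y.
Proof.
move=> H; rewrite leNgt; apply/negP => lt_yx.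
have xy_gt0 : 0 < x - y by rewrite subr_gt0.
have [c_le0|c_gt0] := lerP c 0.
  by move: (H 1%N isT); rewrite divr1; lra.
pose m := (Num.truncn (c / (x - y))).+1.
have lt_m : c / (x - y) < m%:R by apply: truncnS_gt.
have m_gt0 : 0 < m%:R :> R by rewrite ltr0n.
have : c / m%:R < x - y by rewrite ltr_pdivrMr // mulrC -ltr_pdivrMr.
by move: (H m isT); lra.
Qed.

Lemma eq_of_dist_le_divn u v c :
  (forall m : nat, (0 < m)%N -> `|u - v| <= c / m%:R) -> u = v.
Proof.
move=> H; apply/eqP; rewrite -subr_eq0 -normr_le0.
by apply: (le_of_le_add_divn (c := c)) => m m0; rewrite add0r; apply: H.
Qed.

End RealBounds.

Section Quasimorphisms.
Variables (G : groupType) (R : realType).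
Local Open Scope ring_scope.
Implicit Types (P : G -> Prop) (f : G -> R) (x y a b : G) (K S : R).

Definition qm_on P f K :=
  forall x y, P x -> P y -> `|f (x * y)%g - f x - f y| <= K.

Lemma qm_on_ge0 P f K : is_subgroup P -> qm_on P f K -> 0 <= K.
Proof. by move=> hP hK; apply: le_trans (hK _ _ (subgroup1 hP) (subgroup1 hP)). Qed.

Lemma qm_on_le P f K K' : K <= K' -> qm_on P f K -> qm_on P f K'.
Proof. by move=> le_K hK x y hx hy; apply: le_trans (hK _ _ hx hy) le_K. Qed.

Lemma qm_on_normM P f K x y : qm_on P f K -> P x -> P y ->
  `|f (x * y)%g| <= `|f x| + `|f y| + K.
Proof.
by move=> hK hx hy; have := hK _ _ hx hy; have := ler_norm_defect (f (x * y)%g) (f x) (f y); lra.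
Qed.

Lemma qm_on_expg P f K x k : is_subgroup P -> qm_on P f K -> P x ->
  `|f (x ^+ k.+1)%g - k.+1%:R * f x| <= k%:R * K.
Proof.
move=> hP hK hx; elim: k => [|k IH]; first by rewrite expg1 mul1r subrr normr0 mul0r.
have := hK _ _ (subgroupX k.+1 hP hx) hx; rewrite -expgSr => hstep.
have := ler_normD (f (x ^+ k.+2)%g - f (x ^+ k.+1)%g - f x) (f (x ^+ k.+1)%g - k.+1%:R * f x).
have -> : f (x ^+ k.+2)%g - f (x ^+ k.+1)%g - f x + (f (x ^+ k.+1)%g - k.+1%:R * f x)
    = f (x ^+ k.+2)%g - k.+2%:R * f x by rewrite -[k.+2]addn1 natrD; ring.
have -> : k.+1%:R * K = k%:R * K + K by rewrite -addn1 natrD mulrDl mul1r.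
lra.
Qed.

Lemma defect_le P f K : qm_on P f K -> (defect P f <= K%:E)%E.
Proof. by move=> hK; apply: ge_ereal_sup => _ [x hx [y hy <-]]; rewrite lee_fin; apply: hK. Qed.

Lemma defect_ge0 P f : is_subgroup P -> (0 <= defect P f)%E.
Proof.
move=> hP; apply: le_trans (ereal_sup_ubound _); last first.
  by exists 1%g; [exact: subgroup1 | exists 1%g; [exact: subgroup1 | reflexivity]].
by rewrite lee_fin.
Qed.

Lemma qm_on_defect P f S : defect P f = S%:E -> qm_on P f S.
Proof.
move=> hS x y hx hy; rewrite -lee_fin -hS; apply: ereal_sup_ubound.
by exists x => //; exists y.
Qed.

Lemma defect_finite P f K : is_subgroup P -> qm_on P f K -> exists S, defect P f = S%:E.
Proof.
move=> hP hK; have := defect_le hK; have := defect_ge0 f hP.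
by case: (defect P f) => [S| |] //= _ _; exists S.
Qed.

End Quasimorphisms.

Section Bavard.
Variables (G : groupType) (R : realType) (P : G -> Prop) (f : G -> R) (C : R).
Local Open Scope ring_scope.
Hypotheses (hP : is_subgroup P)
  (f_expg : forall x n, P x -> f (x ^+ n)%g = n%:R * f x)
  (f_inv : forall x, P x -> f (x^-1)%g = - f x).

Lemma homogeneous1 : f 1%g = 0.
Proof. by rewrite -(expg0 1%g) f_expg ?mul0r //; apply: subgroup1. Qed.

Lemma pow_gap_double K a b m : qm_on P f K ->
  (forall n, P (gap_comm a b n) /\ `|f (gap_comm a b n)| <= C) ->
  P (pow_gap a b m.*2) /\ `|f (pow_gap a b m.*2)| <= m%:R * (C + K).
Proof.
move=> hK gap_le; elim: m => [|m [w_in w_le]].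
  rewrite /pow_gap /= !expg0 invg1 !mulg1 homogeneous1 normr0 mul0r.
  by split=> //; apply: subgroup1.
have [c_in c_le] := gap_le m.*2.
rewrite doubleS pow_gapSS; split; first exact: subgroupM.
apply: (le_trans (qm_on_normM hK c_in w_in)).
by rewrite -natr1 mulrDl mul1r; lra.
Qed.

Hypothesis f_gap : forall a b n, P a -> P b ->
  P (gap_comm a b n) /\ `|f (gap_comm a b n)| <= C.

(* n (f (ab) - f a - f b) is - f (pow_gap a b n) up to two defects, and pow_gap a b (2m) is a
   product of m commutators gap_comm. *)
Lemma qm_on_avg K : qm_on P f K -> qm_on P f ((C + K) / 2).
Proof.
move=> hK a b ha hb; apply: (le_of_le_add_divn (c := K)) => m m_gt0.
set n := m.*2.
have [w_in w_le] := pow_gap_double m hK (fun k => f_gap k ha hb).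
have an_in := subgroupX n hP ha; have bn_in := subgroupX n hP hb.
have ab_in := subgroupM hP ha hb; have abn_in := subgroupX n hP ab_in.
have e1 := hK _ _ (subgroupM hP an_in bn_in) (subgroupV hP abn_in).
have e2 := hK _ _ an_in bn_in.
rewrite -/(pow_gap a b n) f_inv // !f_expg // in e1 e2.
have nE : n%:R = 2 * m%:R :> R by rewrite /n -muln2 natrM mulrC.
rewrite nE in e1 e2.
set w := f (pow_gap a b n) in w_le e1; set v := f _ in e1 e2.
have m_pos : 0 < m%:R :> R by rewrite ltr0n.
have K0 := qm_on_ge0 hP hK.
have key : `|2 * m%:R * (f (a * b)%g - f a - f b)| <= m%:R * (C + K) + 2 * K.
  have := ler_normD3 (- w) (w - v - - (2 * m%:R * f (a * b)%g))
    (v - 2 * m%:R * f a - 2 * m%:R * f b).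
  have -> : - w + (w - v - - (2 * m%:R * f (a * b)%g)) +
    (v - 2 * m%:R * f a - 2 * m%:R * f b) = 2 * m%:R * (f (a * b)%g - f a - f b) by ring.
  rewrite normrN; lra.
rewrite normrM ger0_norm ?mulr_ge0 // in key.
rewrite -(ler_pM2l (_ : 0 < 2 * m%:R)) ?mulr_gt0 //.
have -> : 2 * m%:R * ((C + K) / 2 + K / m%:R) = m%:R * (C + K) + 2 * K.
  by field; rewrite gt_eqF.
exact: key.
Qed.

Lemma bavard_qm_on K : qm_on P f K -> qm_on P f C.
Proof.
move=> hK; have [S hS] := defect_finite hP hK; have hS' := qm_on_defect hS.
have := defect_le (qm_on_avg hS'); rewrite hS lee_fin => le_S.
by apply: qm_on_le hS'; lra.
Qed.

End Bavard.

Section Homogenization.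
Variables (G : groupType) (R : realType) (P : G -> Prop) (f : G -> R) (K : R).
Local Open Scope ring_scope.
Hypotheses (hP : is_subgroup P) (hK : qm_on P f K).

Definition is_homogenization (h : G -> R) :=
  forall x n, P x -> (0 < n)%N -> `|h x - f (x ^+ n)%g / n%:R| <= K / n%:R.

Lemma homogenization_exists : exists h, is_homogenization h.
Proof.
have K0 := qm_on_ge0 hP hK.
pose E x := [set r : R | exists2 n, (0 < n)%N & r = (f (x ^+ n)%g - K) / n%:R]%classic.
exists (fun x => reals.sup (E x)) => x n hx n_gt0.
have E_le m k : (0 < m)%N -> (0 < k)%N ->
    (f (x ^+ m)%g - K) / m%:R <= (f (x ^+ k)%g + K) / k%:R.
  case: m k => [|m] [|k] // _ _.
  have h1 := qm_on_expg k hP hK (subgroupX m.+1 hP hx).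
  have h2 := qm_on_expg m hP hK (subgroupX k.+1 hP hx).
  rewrite -expgnA in h1; rewrite -expgnA mulnC in h2.
  have m_gt0 : 0 < m.+1%:R :> R by rewrite ltr0n.
  have k_gt0 : 0 < k.+1%:R :> R by rewrite ltr0n.
  rewrite ler_pdivrMr // mulrAC ler_pdivlMr //.
  move: h1 h2; rewrite !ler_norml => /andP[h1 h1'] /andP[h2 h2'].
  rewrite -[k.+1]addn1 -[m.+1]addn1 !natrD in h1 h1' h2 h2' m_gt0 k_gt0 *.
  nra.
have E_sup : has_sup (E x).
  split; first by exists ((f (x ^+ 1)%g - K) / 1%:R), 1%N.
  by exists ((f (x ^+ 1)%g + K) / 1%:R) => r [m m_gt0 ->]; apply: E_le.
have lo : (f (x ^+ n)%g - K) / n%:R <= reals.sup (E x).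
  by apply: sup_upper_bound => //; exists n.
have up : reals.sup (E x) <= (f (x ^+ n)%g + K) / n%:R.
  by apply: ge_sup; [case: E_sup | move=> r [m m_gt0 ->]; apply: E_le].
by rewrite ler_norml; move: lo up; rewrite !mulrBl !mulrDl; lra.
Qed.

Variable h : G -> R.
Hypothesis hh : is_homogenization h.

Lemma homogenization_close x : P x -> `|h x - f x| <= K.
Proof. by move=> hx; have := hh hx (isT : (0 < 1)%N); rewrite expg1 !divr1. Qed.

Lemma homogenization1 : h 1%g = 0.
Proof.
apply: (eq_of_dist_le_divn (c := `|f 1%g| + K)) => n n_gt0.
have n_pos : 0 < n%:R :> R by rewrite ltr0n.
have := hh (subgroup1 hP) n_gt0; rewrite expg1n subr0 => h1.
have := ler_distD (f 1%g / n%:R) (h 1%g) 0; rewrite !subr0 normrM normfV normr_nat.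
by rewrite mulrDl; lra.
Qed.

Lemma homogenizationX x p : P x -> h (x ^+ p)%g = p%:R * h x.
Proof.
move=> hx; case: p => [|p]; first by rewrite expg0 mul0r homogenization1.
apply: (eq_of_dist_le_divn (c := 2 * K)) => n n_gt0.
have n_pos : 0 < n%:R :> R by rewrite ltr0n.
have p_pos : 0 < p.+1%:R :> R by rewrite ltr0n.
set F := f (x ^+ (p.+1 * n))%g.
have A : `|h (x ^+ p.+1)%g - F / n%:R| <= K / n%:R.
  by have := hh (subgroupX p.+1 hP hx) n_gt0; rewrite -expgnA.
have B : `|h x - F / (p.+1 * n)%:R| <= K / (p.+1 * n)%:R.
  by apply: hh => //; rewrite muln_gt0.
have B' : `|p.+1%:R * h x - F / n%:R| <= K / n%:R.
  have -> : p.+1%:R * h x - F / n%:R = p.+1%:R * (h x - F / (p.+1 * n)%:R).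
    by rewrite natrM; field; rewrite !gt_eqF.
  rewrite normrM normr_nat.
  have -> : K / n%:R = p.+1%:R * (K / (p.+1 * n)%:R).
    by rewrite natrM; field; rewrite !gt_eqF.
  by rewrite ler_pM2l.
have := ler_distD (F / n%:R) (h (x ^+ p.+1)%g) (p.+1%:R * h x).
by rewrite distrC in B'; lra.
Qed.

Lemma homogenizationV x : P x -> h (x^-1)%g = - h x.
Proof.
move=> hx; apply: (eq_of_dist_le_divn (c := 3 * K + `|f 1%g|)) => n n_gt0.
have n_pos : 0 < n%:R :> R by rewrite ltr0n.
have xn_in := subgroupX n hP hx.
have A := hh (subgroupV hP hx) n_gt0; rewrite expVgn in A.
have B := hh hx n_gt0.
have Cq := hK (subgroupV hP xn_in) xn_in; rewrite mulVg in Cq.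
set a := f ((x ^+ n)^-1)%g in A Cq; set b := f (x ^+ n)%g in B Cq.
have D : `|a / n%:R + b / n%:R| <= (K + `|f 1%g|) / n%:R.
  rewrite -mulrDl normrM normfV normr_nat.
  apply: ler_wpM2r; first by rewrite invr_ge0 ler0n.
  have := ler_distD (f 1%g) (a + b) 0; rewrite !subr0 distrC.
  have -> : f 1%g - (a + b) = f 1%g - a - b by ring.
  lra.
have -> : h (x^-1)%g - - h x =
    (h (x^-1)%g - a / n%:R) + (h x - b / n%:R) + (a / n%:R + b / n%:R) by ring.
by apply: le_trans (ler_normD3 _ _ _) _; rewrite !mulrDl; lra.
Qed.

Lemma homogenization_conj g (B : R) x :
  (forall y, P y -> P (g * y * g^-1)%g /\ `|f (g * y * g^-1)%g - f y| <= B) ->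
  P x -> h (g * x * g^-1)%g = h x.
Proof.
move=> hg hx; apply: (eq_of_dist_le_divn (c := 2 * K + B)) => n n_gt0.
have n_pos : 0 < n%:R :> R by rewrite ltr0n.
have [gx_in _] := hg _ hx.
have A := hh gx_in n_gt0; rewrite expg_conj in A.
have B1 := hh hx n_gt0.
have [_ Cc] := hg _ (subgroupX n hP hx).
set a := f (g * x ^+ n * g^-1)%g in A Cc; set b := f (x ^+ n)%g in B1 Cc.
have D : `|a / n%:R - b / n%:R| <= B / n%:R.
  rewrite -mulrBl normrM normfV normr_nat.
  by apply: ler_wpM2r; first by rewrite invr_ge0 ler0n.
have -> : h (g * x * g^-1)%g - h x =
    (h (g * x * g^-1)%g - a / n%:R) + (- (h x - b / n%:R)) + (a / n%:R - b / n%:R) by ring.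
apply: le_trans (ler_normD3 _ _ _) _; rewrite normrN.
by rewrite !mulrDl; lra.
Qed.

Lemma homogenization_qm_on : qm_on P h (4 * K).
Proof.
move=> x y hx hy.
have := homogenization_close (subgroupM hP hx hy).
have := homogenization_close hx; have := homogenization_close hy.
have := hK hx hy.
have -> : h (x * y)%g - h x - h y = (f (x * y)%g - f x - f y)
    + (h (x * y)%g - f (x * y)%g) - (h x - f x) - (h y - f y) by ring.
move=> h1 h2 h3 h4.
apply: le_trans (ler_normB _ _) _.
apply: le_trans (lerD (ler_normB _ _) (lexx _)) _.
apply: le_trans (lerD (lerD (ler_normD _ _) (lexx _)) (lexx _)) _.
lra.
Qed.

End Homogenization.

Section HomogeneousQuasimorphisms.
Variables (G : groupType) (R : realType) (H : G -> Prop) (f : G -> R).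
Local Open Scope ring_scope.

Lemma in_QG_intro (D : R) :
  is_subgroup H -> qm_on H f D ->
  (forall x n, H x -> f (x ^+ n)%g = n%:R * f x) ->
  (forall x, H x -> f (x^-1)%g = - f x) ->
  (forall g x, H x -> f (g * x * g^-1)%g = f x) -> in_QG H f.
Proof.
move=> hH hD hX hV hJ; split; first by exists D.
split=> // x [] n hx /=; first by rewrite hX // pmulrn.
have xn_in : H (x ^+ n.+1)%g by apply: subgroupX.
by rewrite expVgn hV // hX // NegzE mulrNz -pmulrn mulNr.
Qed.

Hypothesis hf : in_QG H f.

Lemma in_QG_qm_on : exists D, qm_on H f D.
Proof. by case: hf => [[D hD] _]; exists D. Qed.

Lemma in_QG_expg x n : H x -> f (x ^+ n)%g = n%:R * f x.
Proof. by case: hf => _ [hX _] hx; rewrite (hX x (Posz n) hx) -pmulrn. Qed.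

Lemma in_QG_inv x : H x -> f (x^-1)%g = - f x.
Proof.
case: hf => _ [hX _] hx; have := hX x (Negz 0) hx.
by rewrite /= expg1 NegzE mulrNz -pmulrn mulN1r.
Qed.

Lemma in_QG_conj g x : H x -> f (g * x * g^-1)%g = f x.
Proof. by case: hf => _ [_ hJ]; apply: hJ. Qed.

Lemma in_QG_pcomm_le D g l : is_normal H -> qm_on H f D -> H l -> `|f (pcomm g l)| <= D.
Proof.
move=> hH hD hl; have [sgH _] := hH.
have := hD _ _ (normal_conj g hH hl) (subgroupV sgH hl).
by rewrite in_QG_conj // in_QG_inv // opprK subrK.
Qed.

End HomogeneousQuasimorphisms.

Section CommutatorBounds.
Variables (G : groupType) (R : realType) (L N : G -> Prop).
Hypotheses (hL : is_normal L) (hN : is_normal N) (hNL : forall x, N x -> L x)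
  (hGL : forall x, comm_subgroup L x -> N x).
Variable nu : G -> R.
Hypothesis hnu : in_QG N nu.
Local Open Scope ring_scope.

Let sgL : is_subgroup L. Proof. by case: hL. Qed.
Let sgN : is_subgroup N. Proof. by case: hN. Qed.

Lemma pcomm_in_N g l : L l -> N (pcomm g l).
Proof. by move=> hl; apply: hGL => H _ gen_H; apply: gen_H. Qed.

Lemma pcomm_le_defect_GL1 g l : L l -> ((`|nu (pcomm g l)|)%:E <= defect_GL L 1 nu)%E.
Proof.
move=> hl; apply: ereal_sup_ubound; exists (fun=> g), (fun=> l).
by rewrite big_ord1.
Qed.

Lemma defect_GL1_le K :
  (forall g l, L l -> `|nu (pcomm g l)| <= K) -> (defect_GL L 1 nu <= K%:E)%E.
Proof.
move=> hK; apply: ge_ereal_sup => _ [g [g' [hg' ->]]].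
by rewrite big_ord1 lee_fin; apply: hK.
Qed.

Lemma defect_GL1_le_defect_GL t : (0 < t)%N -> (defect_GL L 1 nu <= defect_GL L t nu)%E.
Proof.
case: t => [|t] // _; apply: ge_ereal_sup => _ [g [g' [hg' ->]]]; rewrite big_ord1.
apply: ereal_sup_ubound.
exists (fun i : 'I_t.+1 => if val i == 0%N then g ord0 else 1%g),
       (fun i : 'I_t.+1 => if val i == 0%N then g' ord0 else 1%g); split.
  by move=> i; case: ifP => _ //; exact: subgroup1 sgL.
rewrite big_ord_recl /= big1 ?mulg1 // => i _.
by rewrite /pcomm invg1 !mulg1.
Qed.

Lemma defect_GL_finite_of_extension psi t : in_QG L psi -> (forall x, N x -> psi x = nu x) ->
  (defect_GL L t nu < +oo)%E.
Proof.
move=> hpsi psi_nu; have [D hD] := in_QG_qm_on hpsi.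
suff prod_le (s : seq 'I_t) (g g' : 'I_t -> G) : (forall i, L (g' i)) ->
    N (\prod_(i <- s) pcomm (g i) (g' i))%g /\
    `|psi (\prod_(i <- s) pcomm (g i) (g' i))%g| <= (size s)%:R * (2 * D).
  apply: (@le_lt_trans _ _ ((size (index_enum 'I_t))%:R * (2 * D))%:E); last exact: ltry.
  apply: ge_ereal_sup => _ [g [g' [hg' ->]]].
  by have [in_N le_D] := prod_le (index_enum 'I_t) g g' hg'; rewrite lee_fin -psi_nu.
move=> hg'; elim: s => [|i s [in_N le_D]].
  rewrite big_nil mul0r (homogeneous1 sgL (in_QG_expg hpsi)) normr0.
  by split=> //; exact: subgroup1 sgN.
have c_in := pcomm_in_N (g i) (hg' i).
have c_le := in_QG_pcomm_le hpsi (g i) hL hD (hg' i).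
rewrite big_cons; split; first exact: subgroupM.
apply: le_trans (qm_on_normM hD (hNL c_in) (hNL in_N)) _.
by rewrite /= -addn1 natrD; lra.
Qed.

Lemma defect_GL1_finite : (defect_GL L 1 nu < +oo)%E ->
  exists2 C, defect_GL L 1 nu = C%:E & forall g l, L l -> `|nu (pcomm g l)| <= C.
Proof.
have := pcomm_le_defect_GL1 1%g (subgroup1 sgL).
case E : (defect_GL L 1 nu) => [C| |] //= _ _; exists C => // g l hl.
by rewrite -lee_fin -E; apply: pcomm_le_defect_GL1.
Qed.

Section BoundedCommutators.
Variable C : R.
Hypothesis hC : forall g l, L l -> `|nu (pcomm g l)| <= C.

Lemma gap_comm_bound a b n : L a -> L b ->
  N (gap_comm a b n) /\ `|nu (gap_comm a b n)| <= C.
Proof.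
move=> ha hb; set v := (a ^+ n * b ^+ n * a^-1 * (a ^+ n)^-1)%g.
have v_in : L v.
  apply: subgroupM sgL _ (subgroupV sgL (subgroupX _ sgL ha)).
  apply: subgroupM sgL _ (subgroupV sgL ha).
  exact: subgroupM sgL (subgroupX _ sgL ha) (subgroupX _ sgL hb).
by split; [apply: pcomm_in_N | apply: hC].
Qed.

Lemma nu_qm_on : qm_on N nu C.
Proof.
have [D hD] := in_QG_qm_on hnu.
apply: (bavard_qm_on sgN (in_QG_expg hnu) (in_QG_inv hnu) _ hD) => a b n ha hb.
by apply: gap_comm_bound; apply: hNL.
Qed.

(* With a = g l g^-1 and b = l^-1 one has [g,l]^n = (pow_gap a b n)^-1 [g,l^n]. *)
Lemma pcomm_le_avg D g l : qm_on N nu D -> L l -> `|nu (pcomm g l)| <= (C + D) / 2.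
Proof.
move=> hD hl; apply: (le_of_le_add_divn (c := (C + D) / 2)) => m m_gt0.
set n := m.*2; set a := (g * l * g^-1)%g; set b := (l^-1)%g.
have ha : L a by apply: normal_conj.
have hb : L b by apply: subgroupV.
have [w_in w_le] := pow_gap_double sgN (in_QG_expg hnu) m hD (fun k => gap_comm_bound k ha hb).
have e1 : (a ^+ n * b ^+ n = pcomm g (l ^+ n))%g by rewrite /a /b expg_conj expVgn.
have pow_pcomm : (pcomm g l ^+ n = (pow_gap a b n)^-1 * pcomm g (l ^+ n))%g.
  by rewrite /pow_gap e1 invgM invgK mulgVK.
have c_in : N (pcomm g l) by apply: pcomm_in_N.
have ln_in : L (l ^+ n)%g := subgroupX n sgL hl.
have cn_in : N (pcomm g (l ^+ n)) := pcomm_in_N g ln_in.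
have cn_le : `|nu (pcomm g (l ^+ n))| <= C := hC g ln_in.
have Q := hD _ _ (subgroupV sgN w_in) cn_in.
rewrite -pow_pcomm (in_QG_expg hnu) // (in_QG_inv hnu) // in Q.
have D0 := qm_on_ge0 sgN hD.
have key : `|n%:R * nu (pcomm g l)| <= m%:R * (C + D) + (C + D).
  by have := ler_norm_defect (n%:R * nu (pcomm g l)) (- nu (pow_gap a b n))
    (nu (pcomm g (l ^+ n))); rewrite normrN; lra.
have nE : n%:R = 2 * m%:R :> R by rewrite /n -muln2 natrM mulrC.
have m_pos : 0 < m%:R :> R by rewrite ltr0n.
rewrite normrM normr_nat nE in key.
rewrite -(ler_pM2l (_ : 0 < 2 * m%:R)) ?mulr_gt0 //.
have -> : 2 * m%:R * ((C + D) / 2 + (C + D) / 2 / m%:R) = m%:R * (C + D) + (C + D).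
  by field; rewrite gt_eqF.
exact: key.
Qed.
End BoundedCommutators.

Lemma defect_GL1_eq_defect : (defect_GL L 1 nu < +oo)%E -> defect_GL L 1 nu = defect N nu.
Proof.
move=> /defect_GL1_finite [C E hC]; rewrite E.
have [S eS] := defect_finite sgN (nu_qm_on hC).
have : (C%:E <= ((C + S) / 2)%:E)%E.
  by rewrite -E; apply: defect_GL1_le => g l; apply: pcomm_le_avg (qm_on_defect eS).
have : (S%:E <= C%:E)%E by rewrite -eS; apply: defect_le (nu_qm_on hC).
by rewrite !lee_fin eS => SC CS; congr (_%:E); lra.
Qed.

Section Extension.
Variable C : R.
Hypothesis hC : forall g l, L l -> `|nu (pcomm g l)| <= C.

Record partial_extension (M : G -> Prop) (psi : G -> R) : Prop := PartialExtension {
  pe_subgroup : is_subgroup M;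
  pe_N : forall x, N x -> M x;
  pe_L : forall x, M x -> L x;
  pe_nu : forall x, N x -> psi x = nu x;
  pe_qm : qm_on M psi C;
  pe_expg : forall x n, M x -> psi (x ^+ n)%g = n%:R * psi x;
  pe_inv : forall x, M x -> psi (x^-1)%g = - psi x;
  pe_conj : forall g x, M x -> psi (g * x * g^-1)%g = psi x }.

Lemma nu_partial_extension : partial_extension N nu.
Proof.
split=> //; [exact: nu_qm_on hC | exact: in_QG_expg | exact: in_QG_inv | exact: in_QG_conj].
Qed.

(* g x g^-1 = [g, x] x, and [g, x] lies in N. *)
Lemma pe_conj_mem M psi g x : partial_extension M psi -> M x -> M (g * x * g^-1)%g.
Proof.
move=> hM hx; rewrite conj_pcomm.
exact: subgroupM (pe_subgroup hM) (pe_N hM (pcomm_in_N g (pe_L hM hx))) hx.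
Qed.

Definition adjoin_pow (M : G -> Prop) (l : G) (x : G) :=
  exists m (j : int), M m /\ x = (m * zpowg l j)%g.

Section ExtensionStep.
Variables (M : G -> Prop) (psi : G -> R) (l : G).
Hypotheses (hM : partial_extension M psi) (hl : L l).

Let sgM := pe_subgroup hM.

Lemma psi_zpowg_linear : exists alpha : R,
  forall j, M (zpowg l j) -> psi (zpowg l j) = j%:~R * alpha.
Proof.
have Mpow_neg k : M (zpowg l (Negz k)) -> M (l ^+ k.+1)%g.
  by move=> hk; rewrite -[X in M X]invgK; apply: subgroupV sgM _; rewrite -expVgn.
case: (pselect (exists2 p, (0 < p)%N & M (l ^+ p)%g)) => [[p p_gt0 hp] | no_pow].
  exists (psi (l ^+ p)%g / p%:R).
  have p_neq0 : p%:R != 0 :> R by rewrite gt_eqF // ltr0n.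
  have pos k : M (l ^+ k)%g -> psi (l ^+ k)%g = k%:R * (psi (l ^+ p)%g / p%:R).
    move=> hk; have e1 := pe_expg hM p hk; have e2 := pe_expg hM k hp.
    rewrite -expgnA in e1; rewrite -expgnA mulnC e1 in e2.
    by apply: (mulfI p_neq0); rewrite e2; field.
  case=> k hk; first by rewrite /= pos // pmulrn.
  have hk' := Mpow_neg k hk.
  by rewrite /= expVgn (pe_inv hM) // (pos k.+1) // NegzE mulrNz -pmulrn mulNr.
exists 0; case=> [[|k]|k] hk; rewrite mulr0.
- exact: homogeneous1 sgM (pe_expg hM).
- by exfalso; apply: no_pow; exists k.+1.
- by exfalso; apply: no_pow; exists k.+1; last exact: Mpow_neg.
Qed.

Lemma adjoin_pow_subgroup : is_subgroup (adjoin_pow M l).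
Proof.
split; first by exists 1%g, 0; split; [exact: subgroup1 | rewrite mulg1].
split.
  move=> _ _ [m [j [hm ->]]] [m' [k [hm' ->]]].
  exists (m * (zpowg l j * m' * (zpowg l j)^-1))%g, (j + k)%R; split.
    exact: subgroupM sgM hm (pe_conj_mem _ hM hm').
  by rewrite zpowgD !mulgA mulgVK.
move=> _ [m [j [hm ->]]].
exists (zpowg l (- j) * m^-1 * (zpowg l (- j))^-1)%g, (- j)%R; split.
  exact: pe_conj_mem hM (subgroupV sgM hm).
by rewrite mulgVK zpowgN invgM.
Qed.

Lemma adjoin_pow_sub_L x : adjoin_pow M l x -> L x.
Proof.
move=> [m [j [hm ->]]].
exact: subgroupM sgL (pe_L hM hm) (subgroup_zpowg j sgL hl).
Qed.


Section AffineApproximation.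
Variable alpha : R.
Hypothesis halpha : forall j, M (zpowg l j) -> psi (zpowg l j) = j%:~R * alpha.

(* The formula m l^j |-> psi m + j alpha is well defined up to C on M<l>. *)
Lemma affine_approx_exists : exists f0 : G -> R,
  forall m j, M m -> `|f0 (m * zpowg l j)%g - (psi m + j%:~R * alpha)| <= C.
Proof.
suff /choice [f0 hf0] : forall x, exists r : R, forall m j, M m -> x = (m * zpowg l j)%g ->
    `|r - (psi m + j%:~R * alpha)| <= C.
  by exists f0 => m j hm; apply: hf0.
move=> x.
case: (pselect (adjoin_pow M l x)) => [[m0 [j0 [hm0 e0]]] | no_rep]; last first.
  by exists 0 => m j hm e; exfalso; apply: no_rep; exists m, j.
exists (psi m0 + j0%:~R * alpha) => m j hm e.
have ed : zpowg l (j - j0) = (m^-1 * m0)%g.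
  rewrite zpowgD zpowgN; apply: (mulgI m); apply: (mulIg (zpowg l j0)).
  by rewrite mulVKg mulgA mulgVK -e -e0.
have hd : M (zpowg l (j - j0)) by rewrite ed; apply: subgroupM sgM (subgroupV sgM hm) hm0.
have em0 : m0 = (m * zpowg l (j - j0))%g by rewrite ed mulVKg.
have Q := pe_qm hM hm hd; rewrite -em0 halpha // intrB in Q.
have -> : psi m0 + j0%:~R * alpha - (psi m + j%:~R * alpha) =
  psi m0 - psi m - (j%:~R - j0%:~R) * alpha by ring.
exact: Q.
Qed.

Variable f0 : G -> R.
Hypothesis hf0 : forall m j, M m -> `|f0 (m * zpowg l j)%g - (psi m + j%:~R * alpha)| <= C.

Lemma affine_approx_qm_on : qm_on (adjoin_pow M l) f0 (4 * C).
Proof.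
move=> _ _ [m [j [hm ->]]] [m' [k [hm' ->]]].
set A := zpowg l j; set m'' := (A * m' * A^-1)%g.
have hm'' : M m'' := pe_conj_mem _ hM hm'.
have -> : (m * A * (m' * zpowg l k) = (m * m'') * zpowg l (j + k))%g.
  by rewrite zpowgD /m'' !mulgA mulgVK.
have F1 := hf0 (j + k) (subgroupM sgM hm hm''); have F2 := hf0 j hm.
have F3 := hf0 k hm'.
have Q := pe_qm hM hm hm''; rewrite (pe_conj hM _ hm') in Q.
rewrite intrD in F1.
set a1 := f0 _ in F1; set a2 := f0 _ in F2; set a3 := f0 _ in F3.
have -> : a1 - a2 - a3 = (a1 - (psi (m * m'')%g + (j%:~R + k%:~R) * alpha))
    + (- (a2 - (psi m + j%:~R * alpha))) + (- (a3 - (psi m' + k%:~R * alpha)))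
    + (psi (m * m'')%g - psi m - psi m') by ring.
by apply: le_trans (ler_normD4 _ _ _ _) _; rewrite !normrN; lra.
Qed.

Lemma affine_approx_conj g y : adjoin_pow M l y ->
  adjoin_pow M l (g * y * g^-1)%g /\ `|f0 (g * y * g^-1)%g - f0 y| <= 4 * C.
Proof.
move=> [m [j [hm ->]]]; set A := zpowg l j; set c := pcomm g A.
have c_in : N c by apply/pcomm_in_N/(subgroup_zpowg j sgL hl).
set m2 := (g * m * g^-1 * c)%g.
have hm2 : M m2 by apply: subgroupM sgM (pe_conj_mem _ hM hm) (pe_N hM c_in).
have -> : (g * (m * A) * g^-1 = m2 * A)%g by rewrite /m2 /c /pcomm !mulgA !mulgVK.
split; first by exists m2, j.
have F1 := hf0 j hm2; have F2 := hf0 j hm.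
have Q := pe_qm hM (pe_conj_mem g hM hm) (pe_N hM c_in).
rewrite (pe_conj hM _ hm) (pe_nu hM c_in) -/m2 in Q.
have c_le : `|nu c| <= C by apply/hC/(subgroup_zpowg j sgL hl).
set a1 := f0 _ in F1; set a2 := f0 _ in F2.
have -> : a1 - a2 = (a1 - (psi m2 + j%:~R * alpha)) + (- (a2 - (psi m + j%:~R * alpha)))
    + (psi m2 - psi m - nu c) + nu c by ring.
by apply: le_trans (ler_normD4 _ _ _ _) _; rewrite !normrN; lra.
Qed.

Lemma homogenization_agrees h : is_homogenization (adjoin_pow M l) f0 (4 * C) h ->
  forall m, M m -> h m = psi m.
Proof.
move=> hh m hm; apply: (eq_of_dist_le_divn (c := 4 * C + C)) => n n_gt0.
have n_pos : 0 < n%:R :> R by rewrite ltr0n.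
have A := hh m n (ex_intro _ m (ex_intro _ 0 (conj hm (esym (mulg1 m))))) n_gt0.
have F := hf0 0 (subgroupX n sgM hm).
rewrite mulg1 mul0r addr0 (pe_expg hM _ hm) in F.
have D : `|(f0 (m ^+ n)%g - n%:R * psi m) / n%:R| <= C / n%:R.
  by rewrite normrM normfV normr_nat; apply: ler_wpM2r => //; rewrite invr_ge0 ler0n.
have -> : h m - psi m = (h m - f0 (m ^+ n)%g / n%:R) + (f0 (m ^+ n)%g - n%:R * psi m) / n%:R.
  by field; rewrite gt_eqF.
by apply: le_trans (ler_normD _ _) _; rewrite [X in _ <= X]mulrDl; lra.
Qed.

End AffineApproximation.

Lemma extension_step : exists M' psi', [/\ partial_extension M' psi',
  (forall x, M x -> M' x), (forall x, M x -> psi' x = psi x) & M' l].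
Proof.
have [alpha halpha] := psi_zpowg_linear.
have [f0 hf0] := affine_approx_exists halpha.
have sgMl := adjoin_pow_subgroup; have f0_qm := affine_approx_qm_on hf0.
have [h hh] := homogenization_exists sgMl f0_qm.
have h_expg := homogenizationX sgMl hh; have h_inv := homogenizationV sgMl f0_qm hh.
have M_Ml x : M x -> adjoin_pow M l x by exists x, 0; rewrite mulg1.
have h_psi := homogenization_agrees hf0 hh.
have h_gap a b n : adjoin_pow M l a -> adjoin_pow M l b ->
    adjoin_pow M l (gap_comm a b n) /\ `|h (gap_comm a b n)| <= C.
  move=> ha hb; have [c_in c_le] := gap_comm_bound hC n (adjoin_pow_sub_L ha) (adjoin_pow_sub_L hb).
  have c_M := pe_N hM c_in.
  by split; [exact: M_Ml | rewrite h_psi // (pe_nu hM)].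
exists (adjoin_pow M l), h; split=> //.
- split=> //.
  + by move=> x hx; apply/M_Ml/(pe_N hM).
  + exact: adjoin_pow_sub_L.
  + by move=> x hx; rewrite h_psi ?(pe_nu hM) //; apply: (pe_N hM).
  + exact: bavard_qm_on sgMl h_expg h_inv h_gap _ (homogenization_qm_on sgMl f0_qm hh).
  + by move=> g x; apply: (homogenization_conj sgMl hh (affine_approx_conj hf0 g)).
- by exists 1%g, 1; split; [exact: subgroup1 | rewrite mul1g /= expg1].
Qed.

End ExtensionStep.

Definition pe_obj := {p : (G -> Prop) * (G -> R) | partial_extension p.1 p.2}.
Definition pe_dom (s : pe_obj) := (sval s).1.
Definition pe_fun (s : pe_obj) := (sval s).2.

Lemma pe_objP s : partial_extension (pe_dom s) (pe_fun s).
Proof. exact: svalP s. Qed.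

Definition pe_le (s t : pe_obj) : Prop :=
  (forall x, pe_dom s x -> pe_dom t x) /\ (forall x, pe_dom s x -> pe_fun t x = pe_fun s x).

Definition pe_base : pe_obj := exist _ (N, nu) nu_partial_extension.

Lemma pe_base_le s : pe_le pe_base s.
Proof. by split=> x hx; [exact: (pe_N (pe_objP s)) | exact: (pe_nu (pe_objP s))]. Qed.

Section Chain.
Variable A : set pe_obj.
Hypotheses (A_total : total_on A pe_le) (A_base : A pe_base).

Definition chain_dom x := exists2 s, A s & pe_dom s x.

Lemma chain_common s t x y : A s -> A t -> pe_dom s x -> pe_dom t y ->
  exists2 r, A r & pe_dom r x /\ pe_dom r y.
Proof.
move=> hs ht hx hy; case: (A_total hs ht) => -[le_dom _].
  by exists t => //; split=> //; apply: le_dom.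
by exists s => //; split=> //; apply: le_dom.
Qed.

Lemma chain_fun_agree s t x : A s -> A t -> pe_dom s x -> pe_dom t x ->
  pe_fun s x = pe_fun t x.
Proof.
move=> hs ht hx hx'; case: (A_total hs ht) => -[_ le_fun].
  by rewrite le_fun.
by rewrite le_fun.
Qed.

Lemma chain_glue : exists fu : G -> R, forall x s, A s -> pe_dom s x -> fu x = pe_fun s x.
Proof.
suff /choice [fu hfu] : forall x, exists r : R, forall s, A s -> pe_dom s x -> r = pe_fun s x.
  by exists fu => x; apply: hfu.
move=> x; case: (pselect (chain_dom x)) => [[s hs hx] | no_s].
  by exists (pe_fun s x) => t ht hx'; apply: chain_fun_agree.
by exists 0 => t ht hx; exfalso; apply: no_s; exists t.
Qed.

Variable fu : G -> R.
Hypothesis hfu : forall x s, A s -> pe_dom s x -> fu x = pe_fun s x.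

Lemma chain_partial_extension : partial_extension chain_dom fu.
Proof.
have sg_dom : is_subgroup chain_dom.
  split; first by exists pe_base => //; exact: subgroup1 sgN.
  split=> [x y [s hs hx] [t ht hy] | x [s hs hx]].
    have [r hr [hx' hy']] := chain_common hs ht hx hy.
    by exists r => //; apply: subgroupM (pe_subgroup (pe_objP r)) hx' hy'.
  by exists s => //; apply: subgroupV (pe_subgroup (pe_objP s)) hx.
split=> //.
- by move=> x hx; exists pe_base.
- by move=> x [s hs hx]; apply: (pe_L (pe_objP s)).
- by move=> x hx; rewrite (hfu A_base hx).
- move=> x y [s hs hx] [t ht hy]; have [r hr [hx' hy']] := chain_common hs ht hx hy.
  have hxy := subgroupM (pe_subgroup (pe_objP r)) hx' hy'.
  rewrite (hfu hr hxy) (hfu hr hx') (hfu hr hy'); exact: (pe_qm (pe_objP r)).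
- move=> x n [s hs hx]; have hxn := subgroupX n (pe_subgroup (pe_objP s)) hx.
  by rewrite (hfu hs hxn) (hfu hs hx); apply: (pe_expg (pe_objP s)).
- move=> x [s hs hx]; have hxV := subgroupV (pe_subgroup (pe_objP s)) hx.
  by rewrite (hfu hs hxV) (hfu hs hx); apply: (pe_inv (pe_objP s)).
- move=> g x [s hs hx]; have hgx := pe_conj_mem g (pe_objP s) hx.
  by rewrite (hfu hs hgx) (hfu hs hx); apply: (pe_conj (pe_objP s)).
Qed.

End Chain.

Lemma chain_upper_bound (A : set pe_obj) : total_on A pe_le ->
  exists u, forall s, A s -> pe_le s u.
Proof.
move=> A_total; pose A0 s := A s \/ s = pe_base.
have A0_total : total_on A0 pe_le.
  move=> s t [hs|->] [ht|->]; first exact: A_total.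
  - by right; apply: pe_base_le.
  - by left; apply: pe_base_le.
  - by left; apply: pe_base_le.
have [fu hfu] := chain_glue A0_total.
exists (exist _ (chain_dom A0, fu) (chain_partial_extension A0_total (or_intror erefl) hfu)).
move=> s hs; split=> x hx; first by exists s => //; left.
by rewrite /pe_fun /= (hfu x s) //; left.
Qed.

Lemma pe_le_refl s : pe_le s s.
Proof. by split. Qed.

Lemma pe_le_trans r s t : pe_le r s -> pe_le s t -> pe_le r t.
Proof.
move=> [rs_dom rs_fun] [st_dom st_fun]; split=> x hx; first exact/st_dom/rs_dom.
by rewrite st_fun ?rs_fun //; apply: rs_dom.
Qed.

Lemma pe_maximal_dom t : (forall s, pe_le t s -> pe_le s t) -> pe_dom t = L.
Proof.
move=> t_max; have ht := pe_objP t.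
apply/funext => x; apply/propext; split; first exact: (pe_L ht).
move=> hx; apply: contrapT => x_out.
have [M' [psi' [hM' le_dom le_fun M'x]]] := extension_step ht hx.
have [dom_le _] := t_max (exist _ (M', psi') hM') (conj le_dom le_fun).
exact/x_out/dom_le.
Qed.

Lemma partial_extension_on_L : exists psi, partial_extension L psi.
Proof.
pose le s t := `[< pe_le s t >].
have [t t_max] : exists t, premaximal le t.
  apply: (@ZL_preorder _ pe_base).
  - by move=> s; apply/asboolP/pe_le_refl.
  - by move=> r s t /asboolP rs /asboolP st; apply/asboolP/(pe_le_trans rs st).
  - move=> A A_total; have [u hu] : exists u, forall s, A s -> pe_le s u.
      apply: chain_upper_bound => s t hs ht.
      by case: (A_total s t hs ht) => /asboolP; [left | right].
    by exists u => s hs; apply/asboolP/hu.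
have <- : pe_dom t = L by apply: pe_maximal_dom => s /asboolP/t_max/asboolP.
by exists (pe_fun t); apply: pe_objP.
Qed.

End Extension.

Lemma extendable_of_defect_GL1_finite : (defect_GL L 1 nu < +oo)%E ->
  exists psi, in_QG L psi /\ (forall x, N x -> psi x = nu x).
Proof.
move=> /defect_GL1_finite [C _ hC]; have [psi hpsi] := partial_extension_on_L hC.
exists psi; split; last exact: pe_nu hpsi.
exact: in_QG_intro sgL (pe_qm hpsi) (pe_expg hpsi) (pe_inv hpsi) (pe_conj hpsi).
Qed.

End CommutatorBounds.

Unset Implicit Arguments. Set Strict Implicit. Set Printing Implicit Defensive.
Local Open Scope ring_scope.

Theorem theorem8p9 (G : groupType) (R : realType) (L N : G -> Prop)
  (hL : is_normal L) (hN : is_normal N)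
  (hNL : forall x, N x -> L x)
  (hGL : forall x, comm_subgroup L x -> N x)
  (nu : G -> R) (hnu : in_QG N nu) :
  [<-> exists psi : G -> R, in_QG L psi /\ (forall x, N x -> psi x = nu x);
       forall t : nat, (0 < t)%N -> (defect_GL L t nu < +oo)%E;
       exists t : nat, (0 < t)%N /\ (defect_GL L t nu < +oo)%E;
       defect_GL L 1 nu = defect N nu;
       (defect_GL L 1 nu < +oo)%E].
Proof.
have [D hD] := in_QG_qm_on hnu.
have [S eS] := defect_finite (proj1 hN) hD.
tfae.
- move=> [psi [hpsi psi_nu]] t _.
  exact: (defect_GL_finite_of_extension hL hN hNL hGL t hpsi psi_nu).
- by move=> fin; exists 1%N; split=> //; apply: fin.
- move=> [t [t_gt0 fin]]; apply: (defect_GL1_eq_defect hL hN hNL hGL hnu).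
  exact: le_lt_trans (defect_GL1_le_defect_GL hL nu t_gt0) fin.
- by move=> ->; rewrite eS ltry.
- exact: (extendable_of_defect_GL1_finite hL hN hNL hGL hnu).
Qed.
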